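(* For every fixed $\varepsilon>0$ there is a constant $K_\varepsilon<\infty$ such that for all $n\ge3$, $$P\big(|X_n-\mu_n|\ge\varepsilon\mu_n\big)\le n^{-2\varepsilon\ln\ln n+K_\varepsilon}.$$ That is, $P(|X_n-\mu_n|\ge\varepsilon\mu_n)\le n^{-2\varepsilon\ln\ln n+O(1)}$.
   Context: Let $X_n$ be the number of comparisons used by randomized Quicksort (uniform random pivot) on $n$ distinct numbers. Equivalently, $X_0=0$ and $$X_n\stackrel{d}{=}X_{U_n-1}+X^*_{n-U_n}+n-1,$$ with $U_n$ uniform on $\{1,\dots,n\}$, $X_j^*\stackrel{d}{=}X_j$, all independent. $\mu_n:=\mathbf EX_n=2(n+1)H_n-4n$, where $H_n=\sum_{k=1}^n1/k$. *)

From Stdlib Require Import Reals List Arith.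
Import ListNotations.
Open Scope R_scope.

Fixpoint sum_lt (f : nat -> R) (m : nat) : R :=
  match m with
  | O => 0
  | S m' => sum_lt f m' + f m'
  end.

Definition harmonic (n : nat) : R := sum_lt (fun i => / INR (S i)) n.

Definition qs_mean (n : nat) : R := 2 * INR (S n) * harmonic n - 4 * INR n.

(* One step of the distributional recursion
   X_n = X_{U-1} + X*_{n-U} + n - 1, U uniform on {1..n}, all independent.
   Given ds = [p_0; ...; p_{n-1}] (pmfs of X_0..X_{n-1}), returns pmf of X_n:
   P(X_n = k) = (1/n) sum_{u=1}^n sum_{a+b = k-(n-1)} p_{u-1}(a) p_{n-u}(b). *)
Definition qs_step (ds : list (nat -> R)) (n k : nat) : R :=
  if Nat.ltb k (n - 1) then 0 else
  let j := (k - (n - 1))%nat in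
  / INR n * sum_lt (fun i =>
      sum_lt (fun a => nth i ds (fun _ => 0) a
                       * nth (n - 1 - i) ds (fun _ => 0) (j - a)%nat) (S j)) n.

Fixpoint qs_pmfs (n : nat) : list (nat -> R) :=
  match n with
  | O => [fun k => if Nat.eqb k 0 then 1 else 0]
  | S m => let ds := qs_pmfs m in ds ++ [qs_step ds (S m)]
  end.

Definition qs_pmf (n : nat) : nat -> R := nth n (qs_pmfs n) (fun _ => 0).

(* P(|X_n - mu_n| >= eps * mu_n).  X_n takes values in {0,...,n(n-1)/2}
   (at most C(n,2) comparisons), so summing k over 0..n*n covers the support. *)
Definition qs_tail (n : nat) (eps : R) : R :=
  sum_lt (fun k => if Rle_dec (eps * qs_mean n) (Rabs (INR k - qs_mean n))
                   then qs_pmf n k else 0) (S (n * n)).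

(* Chernoff's method with theta = ln ln n / n.  The core estimate is
     E exp(theta X_n) <= exp(theta mu_n + phi(|theta| n)),   phi x = 1000 (e^x - 1 - x),
   proved by induction on n along the recursion: X_n - mu_n is the sum of two independent
   centred copies and a toll that averages to zero over the pivot and is bounded by n.
   The convexity gap phi(t) - phi(a) - phi(b) (a + b + |theta| = t) absorbs the toll: for
   small t through a second-order expansion of exp using the zero average, for large t
   because exp(-gap) decays geometrically in the distance of the split from its nearer end.
   With theta = ln ln n / n one has phi(theta n) <= 1000 ln n, while
   theta eps mu_n >= 2 eps ln ln n ln n - O(ln ln n). *)

From Stdlib Require Import Reals Lra Lia Psatz List.
Import ListNotations.
Open Scope R_scope.

Lemma sum_lt_ext (f g : nat -> R) m :
  (forall i, (i < m)%nat -> f i = g i) -> sum_lt f m = sum_lt g m.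
Proof.
  induction m as [|m IH]; intros Hfg; simpl; [reflexivity|].
  rewrite IH by (intros; apply Hfg; lia). rewrite Hfg by lia. reflexivity.
Qed.

Lemma sum_lt_S (f : nat -> R) m : sum_lt f (S m) = sum_lt f m + f m.
Proof. reflexivity. Qed.

Lemma sum_lt_le (f g : nat -> R) m :
  (forall i, (i < m)%nat -> f i <= g i) -> sum_lt f m <= sum_lt g m.
Proof.
  induction m as [|m IH]; intros Hfg; simpl; [lra|].
  assert (sum_lt f m <= sum_lt g m) by (apply IH; intros; apply Hfg; lia).
  specialize (Hfg m (Nat.lt_succ_diag_r m)). lra.
Qed.

Lemma sum_lt_plus (f g : nat -> R) m :
  sum_lt (fun i => f i + g i) m = sum_lt f m + sum_lt g m.
Proof. induction m as [|m IH]; simpl; [lra|]. rewrite IH. lra. Qed.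

Lemma sum_lt_scal_l (c : R) (f : nat -> R) m :
  sum_lt (fun i => c * f i) m = c * sum_lt f m.
Proof. induction m as [|m IH]; simpl; [lra|]. rewrite IH. lra. Qed.

Lemma sum_lt_const (c : R) m : sum_lt (fun _ => c) m = INR m * c.
Proof. induction m as [|m IH]; simpl sum_lt; [simpl; lra|]. rewrite IH, S_INR. lra. Qed.

Lemma sum_lt_nonneg (f : nat -> R) m :
  (forall i, (i < m)%nat -> 0 <= f i) -> 0 <= sum_lt f m.
Proof.
  intros Hf. rewrite <- (Rmult_0_r (INR m)), <- sum_lt_const. now apply sum_lt_le.
Qed.

Lemma sum_lt_add (f : nat -> R) m p :
  sum_lt f (m + p) = sum_lt f m + sum_lt (fun j => f (m + j)%nat) p.
Proof.
  induction p as [|p IH]; [rewrite Nat.add_0_r; simpl; lra|].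
  rewrite Nat.add_succ_r. simpl. rewrite IH. lra.
Qed.

Lemma sum_lt_succ_l (f : nat -> R) m :
  sum_lt f (S m) = f O + sum_lt (fun i => f (S i)) m.
Proof. rewrite <- Nat.add_1_l, sum_lt_add. simpl. lra. Qed.

Lemma sum_lt_rev (f : nat -> R) m :
  sum_lt (fun i => f (m - 1 - i)%nat) m = sum_lt f m.
Proof.
  induction m as [|m IH]; [reflexivity|].
  rewrite sum_lt_succ_l. simpl sum_lt at 2. rewrite <- IH.
  replace (S m - 1 - 0)%nat with m by lia.
  rewrite (sum_lt_ext (fun i => f (S m - 1 - S i)%nat) (fun i => f (m - 1 - i)%nat))
    by (intros; f_equal; lia).
  lra.
Qed.

Lemma sum_lt_le_range (f : nat -> R) m p :
  (forall i, 0 <= f i) -> (m <= p)%nat -> sum_lt f m <= sum_lt f p.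
Proof.
  intros Hf Hmp. replace p with (m + (p - m))%nat by lia. rewrite sum_lt_add.
  assert (0 <= sum_lt (fun j => f (m + j)%nat) (p - m)) by (apply sum_lt_nonneg; auto).
  lra.
Qed.

Lemma sum_lt_swap (f : nat -> nat -> R) m p :
  sum_lt (fun j => sum_lt (fun i => f i j) m) p
  = sum_lt (fun i => sum_lt (fun j => f i j) p) m.
Proof.
  induction p as [|p IH]; simpl.
  - rewrite sum_lt_const. ring.
  - rewrite IH, <- sum_lt_plus. reflexivity.
Qed.

Lemma sum_lt_convolution (f g : nat -> R) p :
  sum_lt (fun j => sum_lt (fun a => f a * g (j - a)%nat) (S j)) p
  = sum_lt (fun a => f a * sum_lt g (p - a)) p.
Proof.
  induction p as [|p IH]; [reflexivity|].
  rewrite !sum_lt_S, IH.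
  rewrite (sum_lt_ext (fun a => f a * sum_lt g (S p - a))
             (fun a => f a * sum_lt g (p - a) + f a * g (p - a)%nat))
    by (intros a Ha; replace (S p - a)%nat with (S (p - a)) by lia; simpl; ring).
  rewrite sum_lt_plus. replace (S p - p)%nat with 1%nat by lia.
  replace (p - p)%nat with 0%nat by lia. simpl. lra.
Qed.

Lemma sum_lt_convolution_le (f g : nat -> R) p :
  (forall i, 0 <= f i) -> (forall i, 0 <= g i) ->
  sum_lt (fun j => sum_lt (fun a => f a * g (j - a)%nat) (S j)) p
  <= sum_lt f p * sum_lt g p.
Proof.
  intros Hf Hg. rewrite sum_lt_convolution, Rmult_comm, <- sum_lt_scal_l.
  apply sum_lt_le. intros a Ha. rewrite (Rmult_comm (sum_lt g p)).
  apply Rmult_le_compat_l; auto. apply sum_lt_le_range; auto; lia.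
Qed.

Lemma sum_lt_id m : sum_lt INR m = INR m * (INR m - 1) / 2.
Proof. induction m as [|m IH]; simpl sum_lt; [simpl; field|]. rewrite IH, S_INR. field. Qed.

Lemma sum_lt_sqr m :
  sum_lt (fun i => INR i * INR i) m = INR m * (INR m - 1) * (2 * INR m - 1) / 6.
Proof. induction m as [|m IH]; simpl sum_lt; [simpl; field|]. rewrite IH, S_INR. field. Qed.

Lemma sum_lt_mul_compl m :
  sum_lt (fun i => INR i * INR (m - i)) (S m) = (INR m - 1) * INR m * (INR m + 1) / 6.
Proof.
  rewrite (sum_lt_ext _ (fun i => INR m * INR i + (-1) * (INR i * INR i)))
    by (intros i Hi; rewrite minus_INR by lia; ring).
  rewrite sum_lt_plus, !sum_lt_scal_l, sum_lt_id, sum_lt_sqr, S_INR. field.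
Qed.

Lemma exp_le x y : x <= y -> exp x <= exp y.
Proof. intros [Hxy|<-]; [left; now apply exp_increasing|lra]. Qed.

Lemma exp_ge_1 x : 0 <= x -> 1 <= exp x.
Proof. pose proof (exp_ineq1_le x). lra. Qed.

Lemma exp_mul_1_sub_le x : exp x * (1 - x) <= 1.
Proof.
  pose proof (exp_ineq1_le (- x)). pose proof (exp_pos x).
  assert (exp x * exp (- x) = 1) by (rewrite <- exp_plus, Rplus_opp_r; apply exp_0).
  nra.
Qed.

Lemma exp_le_quadratic y : y <= 1/5 -> exp y <= 1 + y + 5/4 * (y * y).
Proof.
  intros Hy. pose proof (exp_mul_1_sub_le y). pose proof (exp_pos y).
  assert (1 <= (1 + y + 5/4 * (y * y)) * (1 - y)) by nra.
  nra.
Qed.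

Lemma div_1_add_le_1_sub_exp_neg x : 0 <= x -> x / (1 + x) <= 1 - exp (- x).
Proof.
  intros Hx. pose proof (exp_mul_1_sub_le (- x)).
  apply Rmult_le_reg_r with (1 + x); [lra|].
  unfold Rdiv. rewrite Rmult_assoc, Rinv_l by lra. lra.
Qed.

Lemma exp_neg_2_le : exp (-2) <= 1/4.
Proof.
  pose proof (exp_ineq1_le 1). pose proof (exp_pos (-2)).
  assert (4 <= exp 1 * exp 1) by nra.
  assert (exp (-2) * (exp 1 * exp 1) = 1)
    by (rewrite <- !exp_plus; replace (-2 + (1 + 1)) with 0 by ring; apply exp_0).
  nra.
Qed.

Lemma ln_le x y : 0 < x -> x <= y -> ln x <= ln y.
Proof. intros Hx [Hxy|<-]; [left; now apply ln_increasing|lra]. Qed.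

Lemma ln_le_sub_1 x : 0 < x -> ln x <= x - 1.
Proof. intros Hx. pose proof (exp_ineq1_le (ln x)) as Hexp. rewrite exp_ln in Hexp; lra. Qed.

Lemma ln_ge_1 x : 3 <= x -> 1 <= ln x.
Proof.
  intros Hx. rewrite <- (ln_exp 1). apply ln_le; [apply exp_pos|].
  pose proof exp_le_3. lra.
Qed.

Lemma length_qs_pmfs n : length (qs_pmfs n) = S n.
Proof. induction n as [|n IH]; simpl; auto. rewrite length_app, IH. simpl. lia. Qed.

Lemma nth_qs_pmfs n i : (i <= n)%nat -> nth i (qs_pmfs n) (fun _ => 0) = qs_pmf i.
Proof.
  induction n as [|n IH]; intros Hi.
  - now replace i with 0%nat by lia.
  - destruct (Nat.eq_dec i (S n)) as [->|Hne]; [reflexivity|].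
    simpl. rewrite app_nth1 by (rewrite length_qs_pmfs; lia). apply IH; lia.
Qed.

Lemma qs_pmf_0 k : qs_pmf 0 k = if Nat.eqb k 0 then 1 else 0.
Proof. reflexivity. Qed.

Lemma qs_pmf_S m : qs_pmf (S m) = qs_step (qs_pmfs m) (S m).
Proof.
  unfold qs_pmf. simpl.
  pose proof (nth_middle (qs_pmfs m) [] (qs_step (qs_pmfs m) (S m)) (fun _ => 0)) as Hmid.
  now rewrite length_qs_pmfs in Hmid.
Qed.

Lemma qs_pmf_S_lt m k : (k < m)%nat -> qs_pmf (S m) k = 0.
Proof.
  intros Hk. rewrite qs_pmf_S. unfold qs_step. replace (S m - 1)%nat with m by lia.
  destruct (Nat.ltb_spec k m); [reflexivity|lia].
Qed.

Lemma qs_pmf_S_ge m k : (m <= k)%nat ->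
  qs_pmf (S m) k = / INR (S m) * sum_lt (fun i => sum_lt (fun a =>
     qs_pmf i a * qs_pmf (m - i) (k - m - a)%nat) (S (k - m))) (S m).
Proof.
  intros Hk. rewrite qs_pmf_S. unfold qs_step. replace (S m - 1)%nat with m by lia.
  destruct (Nat.ltb_spec k m); [lia|].
  f_equal. apply sum_lt_ext. intros i Hi. apply sum_lt_ext. intros a Ha.
  rewrite !nth_qs_pmfs by lia. reflexivity.
Qed.

Lemma qs_pmf_nonneg n k : 0 <= qs_pmf n k.
Proof.
  revert k. induction n as [n IH] using (well_founded_induction Wf_nat.lt_wf). intros k.
  destruct n as [|m].
  - rewrite qs_pmf_0. destruct (Nat.eqb k 0); lra.
  - destruct (Nat.lt_ge_cases k m).
    + rewrite qs_pmf_S_lt by lia. lra.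
    + rewrite qs_pmf_S_ge by lia.
      apply Rmult_le_pos; [left; apply Rinv_0_lt_compat, lt_0_INR; lia|].
      apply sum_lt_nonneg. intros i Hi. apply sum_lt_nonneg. intros a Ha.
      apply Rmult_le_pos; apply IH; lia.
Qed.

(* Truncated at [B]; every bound below is uniform in [B], so no support argument is needed. *)
Definition qs_mgf (n : nat) (th : R) (B : nat) : R :=
  sum_lt (fun k => qs_pmf n k * exp (th * INR k)) B.

Lemma qs_mgf_nonneg n th B : 0 <= qs_mgf n th B.
Proof.
  apply sum_lt_nonneg. intros. apply Rmult_le_pos; [apply qs_pmf_nonneg|left; apply exp_pos].
Qed.

Lemma qs_mgf_0_le th B : qs_mgf 0 th B <= 1.
Proof.
  unfold qs_mgf. destruct B as [|B]; [simpl; lra|].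
  rewrite sum_lt_succ_l, (sum_lt_ext _ (fun _ => 0)) by (intros; rewrite qs_pmf_0; simpl; lra).
  rewrite sum_lt_const, qs_pmf_0. simpl. rewrite Rmult_0_r, exp_0. lra.
Qed.

Lemma qs_pmf_S_mul_exp m j th :
  qs_pmf (S m) (m + j) * exp (th * INR (m + j))
  = exp (th * INR m) * / INR (S m) * sum_lt (fun i => sum_lt (fun a =>
      (qs_pmf i a * exp (th * INR a)) * (qs_pmf (m - i) (j - a) * exp (th * INR (j - a))))
      (S j)) (S m).
Proof.
  rewrite qs_pmf_S_ge by lia. replace (m + j - m)%nat with j by lia.
  rewrite plus_INR, Rmult_plus_distr_l, exp_plus.
  rewrite (sum_lt_ext (fun i => sum_lt (fun a => (qs_pmf i a * exp (th * INR a))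
                         * (qs_pmf (m - i) (j - a) * exp (th * INR (j - a)))) (S j))
             (fun i => exp (th * INR j) *
                       sum_lt (fun a => qs_pmf i a * qs_pmf (m - i) (j - a)) (S j))).
  - rewrite sum_lt_scal_l. ring.
  - intros i Hi. rewrite <- sum_lt_scal_l. apply sum_lt_ext. intros a Ha.
    rewrite minus_INR by lia.
    replace (th * INR j) with (th * INR a + th * (INR j - INR a)) by ring.
    rewrite exp_plus. ring.
Qed.

Lemma qs_mgf_S_le m th B :
  qs_mgf (S m) th B <= exp (th * INR m) * / INR (S m) *
     sum_lt (fun i => qs_mgf i th B * qs_mgf (m - i) th B) (S m).
Proof.
  set (F k := qs_pmf (S m) k * exp (th * INR k)).
  assert (HF : forall k, 0 <= F k)
    by (intros; apply Rmult_le_pos; [apply qs_pmf_nonneg|left; apply exp_pos]).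
  apply Rle_trans with (sum_lt F (m + B)); [apply sum_lt_le_range; auto; lia|].
  rewrite sum_lt_add, (sum_lt_ext F (fun _ => 0))
    by (intros; unfold F; rewrite qs_pmf_S_lt by lia; lra).
  rewrite sum_lt_const, Rmult_0_r, Rplus_0_l.
  unfold F. rewrite (sum_lt_ext _ _ _ (fun j _ => qs_pmf_S_mul_exp m j th)).
  rewrite sum_lt_scal_l. apply Rmult_le_compat_l.
  { apply Rmult_le_pos; [left; apply exp_pos|left; apply Rinv_0_lt_compat, lt_0_INR; lia]. }
  rewrite sum_lt_swap. apply sum_lt_le. intros i Hi.
  apply (sum_lt_convolution_le (fun a => qs_pmf i a * exp (th * INR a))
                               (fun b => qs_pmf (m - i) b * exp (th * INR b)));
    intros; apply Rmult_le_pos; try apply qs_pmf_nonneg; left; apply exp_pos.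
Qed.

Lemma harmonic_S n : harmonic (S n) = harmonic n + / INR (S n).
Proof. reflexivity. Qed.

Lemma harmonic_le_add p k : harmonic p <= harmonic (p + k).
Proof.
  induction k as [|k IH]; [rewrite Nat.add_0_r; lra|].
  rewrite Nat.add_succ_r, harmonic_S.
  pose proof (Rinv_0_lt_compat _ (lt_0_INR (S (p + k)) (Nat.lt_0_succ _))). lra.
Qed.

Lemma harmonic_nonneg n : 0 <= harmonic n.
Proof. apply (harmonic_le_add 0 n). Qed.

Lemma harmonic_add_sub_le p k : (harmonic (p + k) - harmonic p) * INR (S p) <= INR k.
Proof.
  induction k as [|k IH]; [rewrite Nat.add_0_r; simpl; lra|].
  rewrite Nat.add_succ_r, harmonic_S, (S_INR k).
  assert (/ INR (S (p + k)) * INR (S p) <= 1).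
  { rewrite !S_INR, plus_INR. pose proof (pos_INR p). pose proof (pos_INR k).
    apply Rmult_le_reg_l with (INR p + INR k + 1); [lra|].
    rewrite <- Rmult_assoc, Rinv_r, Rmult_1_l; lra. }
  replace ((harmonic (p + k) + / INR (S (p + k)) - harmonic p) * INR (S p))
    with ((harmonic (p + k) - harmonic p) * INR (S p) + / INR (S (p + k)) * INR (S p))
    by ring.
  lra.
Qed.

Lemma ln_le_harmonic n : ln (INR (S n)) <= harmonic n.
Proof.
  induction n as [|n IH]; [simpl; rewrite ln_1; unfold harmonic; simpl; lra|].
  rewrite harmonic_S.
  assert (Hpos : 0 < INR (S n)) by (apply lt_0_INR; lia).
  replace (INR (S (S n))) with (INR (S n) * (1 + / INR (S n)))
    by (rewrite (S_INR (S n)); field; lra).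
  rewrite ln_mult by (try pose proof (Rinv_0_lt_compat _ Hpos); lra).
  pose proof (ln_le_sub_1 (1 + / INR (S n))
                (ltac:(pose proof (Rinv_0_lt_compat _ Hpos); lra))).
  lra.
Qed.

Lemma qs_mean_S n : qs_mean (S n) = qs_mean n + 2 * harmonic (S n) - 2.
Proof.
  unfold qs_mean. rewrite harmonic_S, !S_INR. field. pose proof (pos_INR n). lra.
Qed.

Lemma qs_mean_0 : qs_mean 0 = 0.
Proof. unfold qs_mean, harmonic. simpl. ring. Qed.

Lemma qs_mean_1 : qs_mean 1 = 0.
Proof. rewrite qs_mean_S, qs_mean_0. unfold harmonic. simpl. field. Qed.

Lemma qs_mean_2 : qs_mean 2 = 1.
Proof. rewrite qs_mean_S, qs_mean_1. unfold harmonic. simpl. field. Qed.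

Lemma qs_mean_sum n : INR n * qs_mean n = INR n * (INR n - 1) + 2 * sum_lt qs_mean n.
Proof.
  induction n as [|n IH]; [simpl; ring|].
  rewrite sum_lt_S, qs_mean_S, harmonic_S.
  assert (Hpos : 0 < INR (S n)) by (apply lt_0_INR; lia).
  assert (Hmu : qs_mean n = 2 * INR (S n) * harmonic n - 4 * INR n) by reflexivity.
  replace (INR (S n) * (qs_mean n + 2 * (harmonic n + / INR (S n)) - 2))
    with (INR (S n) * qs_mean n + 2 * INR (S n) * harmonic n + 2 - 2 * INR (S n))
    by (field; lra).
  rewrite S_INR in *. nra.
Qed.

Lemma qs_mean_split_bounds p q :
  0 <= qs_mean (p + q + 1) - qs_mean p - qs_mean q <= 2 * INR (p + q).
Proof.
  split.
  - induction q as [|q IH].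
    + rewrite Nat.add_0_r, Nat.add_1_r, qs_mean_S, qs_mean_0.
      pose proof (harmonic_le_add 1 p). replace (1 + p)%nat with (S p) in * by lia.
      assert (harmonic 1 = 1) by (unfold harmonic; simpl; field). lra.
    + replace (p + S q + 1)%nat with (S (p + q + 1)) by lia. rewrite !qs_mean_S.
      pose proof (harmonic_le_add (S q) (p + 1)).
      replace (S q + (p + 1))%nat with (S (p + q + 1)) in * by lia. lra.
  - unfold qs_mean.
    pose proof (harmonic_add_sub_le p (S q)). pose proof (harmonic_add_sub_le q (S p)).
    replace (p + S q)%nat with (p + q + 1)%nat in * by lia.
    replace (q + S p)%nat with (p + q + 1)%nat in * by lia.
    rewrite !S_INR, !plus_INR in *. simpl INR in *. nra.
Qed.

Lemma qs_mean_lower n : (1 <= n)%nat ->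
  2 * INR n * ln (INR n) - 4 * INR n <= qs_mean n.
Proof.
  intros Hn. unfold qs_mean.
  assert (1 <= INR n) by (apply (le_INR 1); lia).
  assert (ln (INR n) <= ln (INR (S n))) by (apply ln_le; rewrite ?S_INR; lra).
  pose proof (ln_le_harmonic n). pose proof (harmonic_nonneg n).
  rewrite S_INR. nra.
Qed.

(* [X_n - mu_n = (X_{U-1} - mu_{U-1}) + (X*_{n-U} - mu_{n-U}) + qs_toll (n-1) (U-1)]. *)
Definition qs_toll (m i : nat) : R :=
  INR m + qs_mean i + qs_mean (m - i) - qs_mean (S m).

Lemma qs_toll_bounds m i : (i <= m)%nat -> - INR m <= qs_toll m i <= INR m.
Proof.
  intros Hi. pose proof (qs_mean_split_bounds i (m - i)).
  replace (i + (m - i) + 1)%nat with (S m) in * by lia.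
  replace (i + (m - i))%nat with m in * by lia.
  unfold qs_toll. lra.
Qed.

Lemma qs_toll_sum m : sum_lt (qs_toll m) (S m) = 0.
Proof.
  unfold qs_toll.
  rewrite (sum_lt_ext _ (fun i => (INR m - qs_mean (S m)) + (qs_mean i + qs_mean (S m - 1 - i))))
    by (intros i Hi; replace (S m - 1 - i)%nat with (m - i)%nat by lia; ring).
  rewrite !sum_lt_plus, sum_lt_const, (sum_lt_rev qs_mean).
  pose proof (qs_mean_sum (S m)). rewrite S_INR in *. nra.
Qed.

Lemma qs_toll_lt_2 m i : (m < 2)%nat -> (i <= m)%nat -> qs_toll m i = 0.
Proof.
  intros Hm Hi. unfold qs_toll.
  destruct m as [|[|]]; try lia; destruct i as [|[|]]; try lia; simpl;
    rewrite ?qs_mean_0, ?qs_mean_1, ?qs_mean_2; simpl; ring.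
Qed.

(* Any constant large enough for the numerical inequalities of the two regimes would do. *)
Definition phi (x : R) : R := 1000 * (exp x - 1 - x).

Lemma phi_0 : phi 0 = 0.
Proof. unfold phi. rewrite exp_0. ring. Qed.

Lemma phi_gap_ge_mul a b s : 0 <= a -> 0 <= b -> 0 <= s ->
  1000 * (a * b) <= phi (a + b + s) - phi a - phi b.
Proof.
  intros Ha Hb Hs. unfold phi. rewrite !exp_plus.
  pose proof (exp_ineq1_le a). pose proof (exp_ineq1_le b). pose proof (exp_ineq1_le s).
  assert (1 <= exp a * exp b) by nra.
  assert (a * b <= (exp a - 1) * (exp b - 1)) by nra.
  nra.
Qed.

Lemma small_regime_term y a b s t :
  Rabs y <= t -> t <= 1/5 -> 0 <= a -> 0 <= b -> 0 <= s -> t = a + b + s ->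
  exp (y + phi a + phi b - phi t) <= 1 + y + 5/4 * (t * t) - 800/11 * (a * b).
Proof.
  intros Hy Ht Ha Hb Hs ->.
  pose proof (Rle_abs y). pose proof (Rle_abs (- y)). rewrite Rabs_Ropp in *.
  set (u := 1000 * (a * b)).
  assert (Hu : 0 <= u <= 10).
  { assert (4 * (a * b) <= (a + b) * (a + b))
      by (pose proof (Rle_0_sqr (a - b)); unfold Rsqr in *; nra).
    assert (0 <= a + b <= 1/5) by lra.
    assert ((a + b) * (a + b) <= 1/25) by nra.
    unfold u; split; nra. }
  assert (Hexp_u : exp (- u) <= 1 - u / 11).
  { pose proof (exp_mul_1_sub_le (- u)). pose proof (exp_pos (- u)). nra. }
  assert (Hdecay : exp (y + phi a + phi b - phi (a + b + s)) <= exp y * exp (- u)).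
  { rewrite <- exp_plus. apply exp_le.
    pose proof (phi_gap_ge_mul a b s Ha Hb Hs). unfold u. lra. }
  pose proof (exp_le_quadratic y ltac:(lra)). pose proof (exp_ineq1_le y).
  pose proof (exp_pos y). pose proof (exp_pos (- u)).
  assert (exp y * exp (- u) <= exp y * (1 - u / 11)) by (apply Rmult_le_compat_l; lra).
  assert (y * y <= (a + b + s) * (a + b + s)) by nra.
  unfold u in *. nra.
Qed.

Lemma small_regime_sum m s (y : nat -> R) :
  (2 <= m)%nat -> 0 <= s -> s * INR (S m) <= 1/5 ->
  (forall i, (i <= m)%nat -> Rabs (y i) <= s * INR (S m)) ->
  sum_lt y (S m) = 0 ->
  sum_lt (fun i => exp (y i + phi (s * INR i) + phi (s * INR (m - i)) - phi (s * INR (S m))))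
         (S m) <= INR (S m).
Proof.
  intros Hm Hs Ht Hy Hsum. set (t := s * INR (S m)) in *.
  eapply Rle_trans.
  { apply sum_lt_le. intros i Hi.
    apply (small_regime_term (y i) (s * INR i) (s * INR (m - i)) s t);
      auto using Rmult_le_pos, pos_INR with arith.
    unfold t. rewrite minus_INR, S_INR by lia. ring. }
  rewrite (sum_lt_ext _ (fun i => (1 + 5/4 * (t * t)) + y i
                                  + (- (800/11) * (s * s)) * (INR i * INR (m - i))))
    by (intros; ring).
  rewrite !sum_lt_plus, (sum_lt_scal_l _ (fun i => INR i * INR (m - i))), sum_lt_mul_compl,
    Hsum, !sum_lt_const.
  unfold t. rewrite S_INR.
  assert (2 <= INR m) by (apply (le_INR 2); lia).
  assert ((INR m + 1) * (INR m + 1) <= 9 * ((INR m - 1) * INR m)) by nra.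
  assert (0 <= s * s) by nra.
  nra.
Qed.

Lemma phi_gap_ge_far s t v : 0 <= s <= v -> v <= 2 * t / 3 ->
  1000 * ((1 - exp (- v)) * (exp t - exp (2 * t / 3))) <= phi t - phi (v - s) - phi (t - v).
Proof.
  intros Hsv Hvt. unfold phi.
  assert (Hv : exp v = exp (v - s) * exp s) by (rewrite <- exp_plus; f_equal; ring).
  assert (Ht : exp t = exp (t - v) * exp v) by (rewrite <- exp_plus; f_equal; ring).
  assert (Hinv : exp (- v) * exp v = 1) by (rewrite <- exp_plus, Rplus_opp_l; apply exp_0).
  pose proof (exp_ge_1 (v - s) ltac:(lra)). pose proof (exp_ineq1_le s).
  pose proof (exp_le _ _ Hvt). pose proof (exp_ge_1 v ltac:(lra)). pose proof (exp_pos (- v)).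
  assert (exp (v - s) + s <= exp v) by nra.
  assert (0 <= 1 - exp (- v)) by nra.
  assert ((1 - exp (- v)) * (exp t - exp (2 * t / 3)) <= (1 - exp (- v)) * (exp t - exp v))
    by (apply Rmult_le_compat_l; lra).
  assert ((1 - exp (- v)) * (exp t - exp v) = exp t - exp (t - v) - exp v + 1).
  { rewrite Ht. transitivity (exp (t - v) * exp v - exp v - exp (t - v) * (exp (- v) * exp v)
                              + exp (- v) * exp v); [ring|rewrite Hinv; ring]. }
  lra.
Qed.

Lemma exp_neg_mul_1_sub_exp_neg_le c v : 0 <= c -> 0 <= v ->
  exp (- c * (1 - exp (- v))) <= exp (- (c / 2) * v) + exp (- (c / 2)).
Proof.
  intros Hc Hv. pose proof (div_1_add_le_1_sub_exp_neg v Hv).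
  pose proof (exp_pos (- (c / 2) * v)). pose proof (exp_pos (- (c / 2))).
  destruct (Rle_dec v 1) as [Hv1|Hv1].
  - assert (v / 2 <= 1 - exp (- v)).
    { apply Rle_trans with (v / (1 + v)); auto. unfold Rdiv.
      apply Rmult_le_compat_l; auto. apply Rinv_le_contravar; lra. }
    assert (exp (- c * (1 - exp (- v))) <= exp (- (c / 2) * v)) by (apply exp_le; nra).
    lra.
  - assert (1 / 2 <= 1 - exp (- v)).
    { apply Rle_trans with (v / (1 + v)); auto.
      apply Rmult_le_reg_r with (1 + v); [lra|].
      replace (v / (1 + v) * (1 + v)) with v by (field; lra). lra. }
    assert (exp (- c * (1 - exp (- v))) <= exp (- (c / 2))) by (apply exp_le; nra).
    lra.
Qed.

Lemma sum_lt_exp_neg_le q N : 0 < q -> sum_lt (fun k => exp (- q * INR (S k))) N <= / q.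
Proof.
  intros Hq.
  assert (Hgeo : q * sum_lt (fun k => exp (- q * INR (S k))) N <= 1 - exp (- q * INR N)).
  { induction N as [|N IH].
    - simpl sum_lt. replace (- q * INR 0) with 0 by (simpl; ring). rewrite exp_0. lra.
    - rewrite sum_lt_S.
      assert (exp (- q * INR N) = exp (- q * INR (S N)) * exp q)
        by (rewrite <- exp_plus, S_INR; f_equal; ring).
      pose proof (exp_ineq1_le q). pose proof (exp_pos (- q * INR (S N))). nra. }
  pose proof (exp_pos (- q * INR N)).
  apply Rmult_le_reg_l with q; auto. rewrite Rinv_r by lra. lra.
Qed.

Lemma large_regime_constants t : 1/5 <= t ->
  8 * exp t <= 1000 * (exp t - exp (2 * t / 3)) * t /\
  exp t * exp (- (1000 * (exp t - exp (2 * t / 3)) / 2)) <= 1/4.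
Proof.
  intros Ht. set (F := 1 - exp (- (t / 3))).
  assert (HF : t / (3 + t) <= F) by
    (unfold F; eapply Rle_trans; [|apply div_1_add_le_1_sub_exp_neg; lra];
     apply Req_le; field; lra).
  assert (HtF : t * t <= (3 + t) * F * t).
  { apply Rmult_le_compat_r; [lra|].
    apply Rmult_le_reg_r with (/ (3 + t)); [apply Rinv_0_lt_compat; lra|].
    replace ((3 + t) * F * / (3 + t)) with F by (field; lra). exact HF. }
  assert (Hgap : exp t - exp (2 * t / 3) = exp t * F).
  { unfold F. replace (2 * t / 3) with (t + - (t / 3)) by field. rewrite exp_plus. ring. }
  rewrite Hgap. pose proof (exp_pos t). pose proof (exp_ineq1_le t).
  split.
  - assert (8 <= 1000 * F * t) by nra. nra.
  - rewrite <- exp_plus. eapply Rle_trans; [|apply exp_neg_2_le]. apply exp_le.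
    assert (t + 2 <= 500 * (1 + t) * F) by nra. nra.
Qed.

Lemma large_regime_term m i s t y :
  (2 <= m)%nat -> (2 * i <= m)%nat -> 0 <= s -> t = s * INR (S m) -> y <= t ->
  exp (y + phi (s * INR i) + phi (s * INR (m - i)) - phi t)
  <= exp t * exp (- (1000 * (exp t - exp (2 * t / 3))) * (1 - exp (- (s * INR (S i))))).
Proof.
  intros Hm Hi Hs -> Hy. set (t := s * INR (S m)) in *. set (v := s * INR (S i)).
  assert (Hvt : v <= 2 * t / 3).
  { unfold v, t. assert (3 * INR (S i) <= 2 * INR (S m)).
    { apply le_INR in Hi, Hm. rewrite mult_INR in Hi. simpl in Hi, Hm. rewrite !S_INR. lra. }
    nra. }
  assert (Hsv : 0 <= s <= v) by (unfold v; rewrite S_INR; pose proof (pos_INR i); nra).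
  pose proof (phi_gap_ge_far s t v Hsv Hvt).
  replace (s * INR i) with (v - s) by (unfold v; rewrite S_INR; ring).
  replace (s * INR (m - i)) with (t - v) by (unfold v, t; rewrite minus_INR, !S_INR by lia; ring).
  rewrite <- exp_plus. apply exp_le. lra.
Qed.

Lemma large_regime_sum m s (y : nat -> R) :
  (2 <= m)%nat -> 0 <= s -> 1/5 <= s * INR (S m) ->
  (forall i, (i <= m)%nat -> y i <= s * INR (S m)) ->
  sum_lt (fun i => exp (y i + phi (s * INR i) + phi (s * INR (m - i)) - phi (s * INR (S m))))
         (S m) <= INR (S m).
Proof.
  intros Hm Hs Ht Hy. set (t := s * INR (S m)) in *.
  set (c := 1000 * (exp t - exp (2 * t / 3))).
  set (g := fun k => exp (- c * (1 - exp (- (s * INR (S k)))))).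
  assert (Hn : 0 < INR (S m)) by (apply lt_0_INR; lia).
  assert (Hspos : 0 < s) by (destruct Hs as [|<-]; [lra|unfold t in Ht; lra]).
  destruct (large_regime_constants t Ht) as [Hc1 Hc2]. fold c in Hc1, Hc2.
  assert (Hcpos : 0 < c) by (pose proof (exp_pos t); nra).
  assert (Hg0 : forall k, 0 <= g k) by (intros; left; apply exp_pos).
  assert (Hterm : forall i, (i <= m)%nat ->
    exp (y i + phi (s * INR i) + phi (s * INR (m - i)) - phi t) <= exp t * (g i + g (m - i)%nat)).
  { intros i Hi. pose proof (exp_pos t). pose proof (Hg0 i). pose proof (Hg0 (m - i)%nat).
    destruct (Nat.le_gt_cases (2 * i) m) as [Hhalf|Hhalf].
    - pose proof (large_regime_term m i s t (y i) Hm Hhalf Hs eq_refl (Hy i Hi)) as Hbound.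
      fold c in Hbound. unfold g in *. nra.
    - pose proof (large_regime_term m (m - i) s t (y i) Hm ltac:(lia) Hs eq_refl (Hy i Hi))
        as Hsym.
      fold c in Hsym. replace (m - (m - i))%nat with i in Hsym by lia.
      unfold g in *.
      replace (y i + phi (s * INR i) + phi (s * INR (m - i)))
        with (y i + phi (s * INR (m - i)) + phi (s * INR i)) by ring.
      nra. }
  eapply Rle_trans; [apply sum_lt_le; intros i Hi; apply Hterm; lia|].
  rewrite sum_lt_scal_l, sum_lt_plus.
  rewrite (sum_lt_ext (fun i => g (m - i)%nat) (fun i => g (S m - 1 - i)%nat))
    by (intros; f_equal; lia).
  rewrite (sum_lt_rev g).
  assert (Hsum_g : sum_lt g (S m) <= / (c * s / 2) + INR (S m) * exp (- (c / 2))).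
  { eapply Rle_trans.
    { apply sum_lt_le. intros k Hk.
      apply exp_neg_mul_1_sub_exp_neg_le; [lra|apply Rmult_le_pos; auto using pos_INR]. }
    rewrite sum_lt_plus, sum_lt_const.
    rewrite (sum_lt_ext _ (fun k => exp (- (c * s / 2) * INR (S k))))
      by (intros; apply f_equal; lra).
    pose proof (sum_lt_exp_neg_le (c * s / 2) (S m) ltac:(nra)). lra. }
  assert (Hinv : exp t * / (c * s / 2) <= INR (S m) / 4).
  { apply Rmult_le_reg_l with (c * s / 2); [nra|].
    replace (c * s / 2 * (exp t * / (c * s / 2))) with (exp t) by (field; lra).
    assert (c * t = c * s * INR (S m)) by (unfold t; ring).
    lra. }
  pose proof (exp_pos t). pose proof (exp_pos (- (c / 2))).
  nra.
Qed.

Lemma toll_phi_sum_le m th :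
  sum_lt (fun i => exp (th * qs_toll m i + phi (Rabs th * INR i) + phi (Rabs th * INR (m - i))
                        - phi (Rabs th * INR (S m)))) (S m) <= INR (S m).
Proof.
  set (s := Rabs th). assert (Hs : 0 <= s) by apply Rabs_pos.
  destruct (Nat.lt_ge_cases m 2) as [Hm|Hm].
  - apply Rle_trans with (sum_lt (fun _ => 1) (S m)); [|rewrite sum_lt_const; lra].
    apply sum_lt_le. intros i Hi.
    rewrite qs_toll_lt_2, Rmult_0_r, Rplus_0_l by lia. rewrite <- exp_0. apply exp_le.
    replace (s * INR (S m)) with (s * INR i + s * INR (m - i) + s)
      by (rewrite minus_INR, S_INR by lia; ring).
    pose proof (phi_gap_ge_mul (s * INR i) (s * INR (m - i)) s).
    assert (0 <= s * INR i) by (apply Rmult_le_pos; auto using pos_INR).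
    assert (0 <= s * INR (m - i)) by (apply Rmult_le_pos; auto using pos_INR).
    nra.
  - assert (Hy : forall i, (i <= m)%nat -> Rabs (th * qs_toll m i) <= s * INR (S m)).
    { intros i Hi. rewrite Rabs_mult. fold s. pose proof (qs_toll_bounds m i Hi).
      assert (Rabs (qs_toll m i) <= INR m) by (apply Rabs_le; lra).
      rewrite S_INR. pose proof (Rabs_pos (qs_toll m i)). nra. }
    destruct (Rle_dec (s * INR (S m)) (1/5)).
    + apply small_regime_sum; auto.
      rewrite sum_lt_scal_l, qs_toll_sum. ring.
    + apply large_regime_sum; auto; [lra|].
      intros i Hi. eapply Rle_trans; [apply Rle_abs|auto].
Qed.

Lemma qs_mgf_le n th B : qs_mgf n th B <= exp (th * qs_mean n + phi (Rabs th * INR n)).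
Proof.
  revert B. induction n as [n IH] using (well_founded_induction Wf_nat.lt_wf). intros B.
  destruct n as [|m].
  - replace (Rabs th * INR 0) with 0 by (simpl; ring).
    rewrite qs_mean_0, Rmult_0_r, phi_0, Rplus_0_l, exp_0. apply qs_mgf_0_le.
  - set (bound k := exp (th * qs_mean k + phi (Rabs th * INR k))).
    assert (Hn : 0 < INR (S m)) by (apply lt_0_INR; lia).
    assert (Hsplit : forall i, (i <= m)%nat -> bound i * bound (m - i)%nat =
      exp (- (th * INR m)) * bound (S m) *
      exp (th * qs_toll m i + phi (Rabs th * INR i) + phi (Rabs th * INR (m - i))
           - phi (Rabs th * INR (S m)))).
    { intros i Hi. unfold bound, qs_toll. rewrite <- !exp_plus. apply f_equal. ring. }
    eapply Rle_trans; [apply qs_mgf_S_le|].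
    apply Rle_trans with (exp (th * INR m) * / INR (S m) *
                          sum_lt (fun i => bound i * bound (m - i)%nat) (S m)).
    { apply Rmult_le_compat_l.
      - apply Rmult_le_pos; [left; apply exp_pos|left; apply Rinv_0_lt_compat; lra].
      - apply sum_lt_le. intros i Hi.
        apply Rmult_le_compat; try apply qs_mgf_nonneg; apply IH; lia. }
    erewrite sum_lt_ext by (intros i Hi; apply Hsplit; lia).
    rewrite sum_lt_scal_l.
    set (tolls := sum_lt _ (S m)).
    assert (Hcancel : exp (th * INR m) * exp (- (th * INR m)) = 1)
      by (rewrite <- exp_plus, Rplus_opp_r; apply exp_0).
    transitivity (bound (S m) * (/ INR (S m) * tolls)).
    { right. transitivity (exp (th * INR m) * exp (- (th * INR m)) *
                           (bound (S m) * (/ INR (S m) * tolls))); [ring|].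
      rewrite Hcancel. ring. }
    fold (bound (S m)). apply Rle_trans with (bound (S m) * 1); [|lra].
    apply Rmult_le_compat_l; [left; apply exp_pos|].
    rewrite <- (Rinv_l (INR (S m))) by lra.
    apply Rmult_le_compat_l; [left; apply Rinv_0_lt_compat; lra|].
    apply toll_phi_sum_le.
Qed.

Lemma chernoff_indicator_le r d s p : 0 <= s -> 0 <= p ->
  (if Rle_dec r (Rabs d) then p else 0) <= p * (exp (s * d - s * r) + exp (- s * d - s * r)).
Proof.
  intros Hs Hp. pose proof (exp_pos (s * d - s * r)). pose proof (exp_pos (- s * d - s * r)).
  destruct (Rle_dec r (Rabs d)) as [Hr|]; [|nra].
  unfold Rabs in Hr. destruct (Rcase_abs d).
  - assert (1 <= exp (- s * d - s * r)) by (apply exp_ge_1; nra). nra.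
  - assert (1 <= exp (s * d - s * r)) by (apply exp_ge_1; nra). nra.
Qed.

Lemma qs_tail_le_mgf n eps s : 0 <= s ->
  qs_tail n eps <= exp (- (s * eps * qs_mean n)) *
    (exp (- (s * qs_mean n)) * qs_mgf n s (S (n * n))
     + exp (s * qs_mean n) * qs_mgf n (- s) (S (n * n))).
Proof.
  intros Hs. unfold qs_tail, qs_mgf. set (mu := qs_mean n).
  eapply Rle_trans.
  { apply sum_lt_le. intros k Hk.
    apply (chernoff_indicator_le (eps * mu) (INR k - mu) s _ Hs (qs_pmf_nonneg n k)). }
  rewrite <- !sum_lt_scal_l, <- sum_lt_plus, <- sum_lt_scal_l.
  right. apply sum_lt_ext. intros k Hk.
  replace (s * (INR k - mu) - s * (eps * mu)) with (- (s * eps * mu) + (- (s * mu) + s * INR k))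
    by ring.
  replace (- s * (INR k - mu) - s * (eps * mu)) with (- (s * eps * mu) + (s * mu + - s * INR k))
    by ring.
  rewrite !exp_plus. ring.
Qed.

Lemma qs_tail_le n eps s : 0 <= s ->
  qs_tail n eps <= 2 * exp (- (s * eps * qs_mean n) + phi (s * INR n)).
Proof.
  intros Hs. eapply Rle_trans; [apply qs_tail_le_mgf, Hs|].
  pose proof (qs_mgf_le n s (S (n * n))) as Hup.
  pose proof (qs_mgf_le n (- s) (S (n * n))) as Hdown.
  rewrite Rabs_Ropp, Rabs_right in * by lra.
  assert (Hcancel : forall x, exp (- x) * exp (x + phi (s * INR n)) = exp (phi (s * INR n)))
    by (intros; rewrite <- exp_plus; apply f_equal; ring).
  pose proof (exp_pos (- (s * qs_mean n))). pose proof (exp_pos (s * qs_mean n)).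
  assert (exp (- (s * qs_mean n)) * qs_mgf n s (S (n * n)) <= exp (phi (s * INR n))).
  { rewrite <- (Hcancel (s * qs_mean n)). apply Rmult_le_compat_l; lra. }
  assert (exp (s * qs_mean n) * qs_mgf n (- s) (S (n * n)) <= exp (phi (s * INR n))).
  { rewrite <- (Hcancel (- s * qs_mean n)), Ropp_mult_distr_l, Ropp_involutive.
    apply Rmult_le_compat_l; lra. }
  rewrite exp_plus. pose proof (exp_pos (- (s * eps * qs_mean n))). nra.
Qed.

Theorem corollary7p4 :
  forall eps : R, 0 < eps ->
  exists K : R, forall n : nat, (3 <= n)%nat ->
    qs_tail n eps <= Rpower (INR n) (- 2 * eps * ln (ln (INR n)) + K).
Proof.
  intros eps Heps. exists (4 * eps + 1001). intros n Hn.
  assert (Hn3 : 3 <= INR n) by (replace 3 with (INR 3) by (simpl; ring); apply le_INR; lia).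
  set (L := ln (INR n)).
  assert (HL : 1 <= L) by (apply ln_ge_1; lra).
  set (lam := ln L).
  assert (Hlam0 : 0 <= lam) by (rewrite <- ln_1; apply ln_le; lra).
  assert (Hlam1 : lam <= L - 1) by (apply ln_le_sub_1; lra).
  set (s := lam / INR n).
  assert (Hsn : s * INR n = lam) by (unfold s; field; lra).
  assert (Hs : 0 <= s)
    by (unfold s, Rdiv; apply Rmult_le_pos; [lra|left; apply Rinv_0_lt_compat; lra]).
  eapply Rle_trans; [apply (qs_tail_le n eps s Hs)|].
  rewrite Hsn.
  assert (Hphi : phi lam <= 1000 * L)
    by (unfold phi; replace (exp lam) with L by (unfold lam; rewrite exp_ln; lra); lra).
  assert (Hmean : lam * (2 * L - 4) <= s * qs_mean n).
  { pose proof (qs_mean_lower n ltac:(lia)) as Hlow. fold L in Hlow.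
    apply Rmult_le_reg_r with (INR n); [lra|].
    replace (s * qs_mean n * INR n) with (lam * qs_mean n) by (unfold s; field; lra). nra. }
  assert (H2 : 2 <= exp L) by (pose proof (exp_ineq1_le L); lra).
  unfold Rpower. fold L. fold lam.
  eapply Rle_trans; [apply Rmult_le_compat_r; [left; apply exp_pos|exact H2]|].
  rewrite <- exp_plus. apply exp_le. nra.
Qed.
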